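(* For $m\ge1$ define polynomials by $p_1(x)=x$, $q_1(x)=1$, and for $m>1$, $p_m(x)=p_{m-1}(x)q_{m-1}(x)$ and $q_m(x)=q_{m-1}(x)^2-\frac{p_{m-1}(x)^2}{x}$. For $m\ge1$ let $A_m$ be the $m\times m$ coloring matrix with entries $a_{ij}=1$ if $i>j$ and $a_{ij}=0$ if $i\le j$. Then for every $m\ge1$, the generating function $F^{(m)}(x)=\sum_{n\ge1}t_{A_m}^{(m)}(n)x^n$ is rational, and $$F^{(m)}(x)=\frac{p_m(x)}{q_m(x)}.$$
   Context: A plane tree is an unlabeled rooted tree in which the children of every vertex are linearly ordered. A coloring matrix is an $m\times m$ matrix $A=(a_{ij})$ with entries in $\{0,1\}$. An $A$-coloring of a plane tree assigns to each vertex a color in $\{1,\dots,m\}$ such that whenever a vertex of color $j$ is a child of a vertex of color $i$, $a_{ij}=1$. Let $t_A^{(i)}(n)$ be the number of pairs (plane tree with $n$ vertices, $A$-coloring of it) in which the root has color $i$. *)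

From mathcomp Require Import all_boot all_order all_algebra.
Set Implicit Arguments. Unset Strict Implicit. Unset Printing Implicit Defensive.
Import GRing.Theory.
Local Open Scope ring_scope.

(* A plane tree together with a coloring of its vertices by colors of type T:
   each vertex carries its color, children are linearly ordered (a seq). *)
Inductive ctree (T : Type) : Type := CNode of T & seq (ctree T).

Definition root_color (T : Type) (t : ctree T) : T :=
  let: CNode c _ := t in c.

Fixpoint nverts (T : Type) (t : ctree T) : nat :=
  let: CNode _ cs := t in
  ((fix sz (cs : seq (ctree T)) : nat :=
      match cs with [::] => 0%N | u :: cs' => (nverts u + sz cs')%N end) cs).+1.

(* Colors 1..m are represented by 'I_m (color k <-> index k-1). *)
Fixpoint is_Acoloring (m : nat) (A : 'M[nat]_m) (t : ctree 'I_m) : bool :=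
  let: CNode i cs := t in
  (fix ok (cs : seq (ctree 'I_m)) : bool :=
     match cs with
     | [::] => true
     | u :: cs' => [&& A i (root_color u) == 1%N, is_Acoloring A u & ok cs']
     end) cs.

Definition has_card (T : Type) (P : T -> Prop) (k : nat) : Prop :=
  exists f : 'I_k -> T, injective f /\ (forall x, P x <-> exists i, f i = x).

Definition tA_is (m : nat) (A : 'M[nat]_m) (i : 'I_m) (n k : nat) : Prop :=
  has_card (fun t : ctree 'I_m =>
              [/\ is_Acoloring A t, root_color t = i & nverts t = n]) k.

Definition Amat (m : nat) : 'M[nat]_m :=
  \matrix_(i < m, j < m) (if (j < i)%N then 1%N else 0%N).

(* pq k = (p_{k+1}, q_{k+1}) *)
Fixpoint pq (k : nat) : {poly rat} * {poly rat} :=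
  match k with
  | 0%N => ('X, 1)
  | k'.+1 => let: (p, q) := pq k' in (p * q, q ^+ 2 - (p ^+ 2 %/ 'X))
  end.

Definition pm (m : nat) : {poly rat} := (pq m.-1).1.
Definition qm (m : nat) : {poly rat} := (pq m.-1).2.

(* A tree whose root has color k is either a single vertex or its first subtree,
   rooted at a color j < k, grafted onto a smaller tree whose root has color k.
   Hence the series T_k of trees with root color k (colors counted from 0)
   satisfy T_k = x + S_k T_k, where S_k = T_0 + ... + T_(k-1), i.e.
   T_k = x / (1 - S_k).  Writing p_(k+1) = x r_k, induction on k shows that
   1 / (1 - S_k) = r_k / q_(k+1), hence T_k = p_(k+1) / q_(k+1).  All series
   identities are proved modulo x^N for arbitrary N, and the counts are the
   lengths of explicit duplicate-free enumerations of the colored trees. *)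

From Stdlib Require List.
From HB Require Import structures.
From mathcomp Require Import all_boot all_order all_algebra zify ring.
Import GRing.Theory.

Set Implicit Arguments.
Unset Strict Implicit.
Unset Printing Implicit Defensive.

Section Grafting.
Variable T : Type.

Fixpoint ctree_nested_ind (P : ctree T -> Prop)
    (IH : forall c cs, List.Forall P cs -> P (CNode c cs)) (t : ctree T) : P t :=
  let: CNode c cs := t in
  IH c cs ((fix all_P cs : List.Forall P cs :=
              match cs with
              | [::] => List.Forall_nil P
              | u :: cs' => List.Forall_cons u (ctree_nested_ind IH u) (all_P cs')
              end) cs).

Definition graft (u t : ctree T) : ctree T := let: CNode c cs := t in CNode c (u :: cs).

Lemma root_color_graft u t : root_color (graft u t) = root_color t.
Proof. by case: t. Qed.

Lemma nverts_graft u t : nverts (graft u t) = nverts u + nverts t.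
Proof. by case: t => c cs /=; rewrite addnS. Qed.

Lemma nverts_gt0 (t : ctree T) : 0 < nverts t.
Proof. by case: t. Qed.

Lemma graft_inj : injective (fun p : ctree T * ctree T => graft p.1 p.2).
Proof. by case=> u [c cs] [u' [c' cs']] [-> -> ->]. Qed.

Lemma leaf_or_graft (t : ctree T) : (exists c, t = CNode c [::]) \/ exists u t', t = graft u t'.
Proof. by case: t => c [|u cs]; [left; exists c | right; exists u, (CNode c cs)]. Qed.

End Grafting.

Section CTreeEqType.
Variable T : eqType.

Fixpoint ctree_to_gen (t : ctree T) : GenTree.tree T :=
  let: CNode c cs := t in GenTree.Node 0 (GenTree.Leaf c :: map ctree_to_gen cs).

Fixpoint ctree_of_gen (g : GenTree.tree T) : option (ctree T) :=
  if g is GenTree.Node _ (GenTree.Leaf c :: gs) then Some (CNode c (pmap ctree_of_gen gs))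
  else None.

Lemma ctree_to_genK : pcancel ctree_to_gen ctree_of_gen.
Proof.
elim/ctree_nested_ind => c cs IH /=; congr (Some (CNode c _)).
by elim: IH => //= u cs' -> _ ->.
Qed.

End CTreeEqType.

HB.instance Definition _ (T : eqType) :=
  Equality.copy (ctree T) (pcan_type (@ctree_to_genK T)).

Definition enumerates (T : eqType) (s : seq T) (P : pred T) :=
  uniq s /\ forall x, (x \in s) = P x.

Lemma enumerates_size (T : eqType) (s1 s2 : seq T) (P : pred T) :
  enumerates s1 P -> enumerates s2 P -> size s1 = size s2.
Proof. by move=> [u1 m1] [u2 m2]; apply/perm_size/uniq_perm => // x; rewrite m1 m2. Qed.

Lemma has_card_seq (T : eqType) (P : T -> Prop) (s : seq T) :
  uniq s -> (forall x, P x <-> x \in s) -> has_card P (size s).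
Proof.
move=> us Ps; exists (tnth (in_tuple s)); split; first exact/tuple_uniqP.
move=> x; rewrite Ps; split => [xs | [i <-]]; last exact: mem_tnth.
have xs' : index x s < size s by rewrite index_mem.
by exists (Ordinal xs'); rewrite (tnth_nth x) nth_index.
Qed.

Lemma uniq_flatten_key (S T : eqType) (f : S -> seq T) (key : T -> S) (s : seq S) :
  uniq s -> {in s, forall x, uniq (f x)} -> {in s, forall x, {in f x, forall y, key y = x}} ->
  uniq (flatten (map f s)).
Proof.
elim: s => //= x s IH /andP[xs us] uf kf.
have sub_s x' : x' \in s -> x' \in x :: s by rewrite inE => ->; rewrite orbT.
rewrite cat_uniq uf ?mem_head // IH // => [|x' /sub_s/uf | x' /sub_s/kf] //.
rewrite /= andbT; apply/hasPn => y /flatten_mapP[x' x's yx']; apply/negP => yx.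
have kx : key y = x by apply: kf; rewrite ?mem_head.
have kx' : key y = x' by apply: kf; rewrite ?sub_s.
by rewrite -kx kx' x's in xs.
Qed.

Section Enumeration.
Variables (m : nat) (A : 'M[nat]_m).

Definition is_Atree (i : 'I_m) (n : nat) (t : ctree 'I_m) : bool :=
  [&& is_Acoloring A t, root_color t == i & nverts t == n].

Lemma is_Acoloring_graft u t :
  is_Acoloring A (graft u t) =
  [&& A (root_color t) (root_color u) == 1, is_Acoloring A u & is_Acoloring A t].
Proof. by case: t. Qed.

Lemma is_Atree_graft i n u t :
  is_Atree i n (graft u t) =
  [&& A i (root_color u) == 1, is_Acoloring A u, is_Acoloring A t, root_color t == i
    & nverts u + nverts t == n].
Proof.
rewrite /is_Atree is_Acoloring_graft root_color_graft nverts_graft.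
by case: (root_color t =P i) => [-> | _]; rewrite ?andbF //= -!andbA.
Qed.

Definition first_children (tr : nat -> 'I_m -> seq (ctree 'I_m)) (i : 'I_m) (a : nat) :=
  flatten [seq tr a j | j <- enum 'I_m & A i j == 1].

Definition graft_pairs (tr : nat -> 'I_m -> seq (ctree 'I_m)) (i : 'I_m) (n : nat) :=
  flatten [seq [seq (u, t) | u <- first_children tr i a, t <- tr (n - a) i]
          | a <- iota 1 n.-1].

Fixpoint enum_trees_fuel (fuel n : nat) (i : 'I_m) : seq (ctree 'I_m) :=
  if fuel is fuel'.+1 then
    if n == 1 then [:: CNode i [::]]
    else [seq graft p.1 p.2 | p <- graft_pairs (enum_trees_fuel fuel') i n]
  else [::].

Lemma first_children_enumerates tr i a :
    (forall j, enumerates (tr a j) (is_Atree j a)) ->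
  enumerates (first_children tr i a)
    [pred u | [&& A i (root_color u) == 1, is_Acoloring A u & nverts u == a]].
Proof.
move=> tr_ok; split.
  apply: (uniq_flatten_key (key := @root_color _)).
  - by rewrite filter_uniq ?enum_uniq.
  - by move=> j _; case: (tr_ok j).
  by move=> j _ u; case: (tr_ok j) => _ ->; case/and3P => _ /eqP.
move=> u /=; apply/flatten_mapP/idP => [[j] | /and3P[Aiu Au au]].
  rewrite mem_filter => /andP[Aij _]; case: (tr_ok j) => _ -> /and3P[Au /eqP uj ua].
  by rewrite uj Aij Au ua.
exists (root_color u); first by rewrite mem_filter Aiu mem_enum.
by case: (tr_ok (root_color u)) => _ ->; rewrite /is_Atree Au !eqxx.
Qed.

Lemma graft_pairs_enumerates tr i n :
    (forall a j, a < n -> enumerates (tr a j) (is_Atree j a)) ->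
  enumerates (graft_pairs tr i n) [pred p | is_Atree i n (graft p.1 p.2)].
Proof.
move=> tr_ok.
have ch_ok a : a < n -> enumerates (first_children tr i a)
    [pred u | [&& A i (root_color u) == 1, is_Acoloring A u & nverts u == a]].
  by move=> an; apply: first_children_enumerates => j; apply: tr_ok.
have rest_ok a : 0 < a < n -> enumerates (tr (n - a) i) (is_Atree i (n - a)).
  by move=> an; apply: tr_ok; lia.
split.
  apply: (uniq_flatten_key (key := fun p => nverts p.1)); first exact: iota_uniq.
    move=> a; rewrite mem_iota => /andP[a0 an]; apply: allpairs_uniq.
    - by case: (ch_ok a ltac:(lia)).
    - by case: (rest_ok a ltac:(lia)).
    by move=> [? ?] [? ?] _ _.
  move=> a; rewrite mem_iota => /andP[a0 an] _ /allpairsP[[u t] [/= + _ ->]].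
  by case: (ch_ok a ltac:(lia)) => _ -> /and3P[_ _ /eqP].
case=> u t; rewrite /= is_Atree_graft.
apply/flatten_mapP/idP => [[a] | /and5P[Aiu Au At ti /eqP sz]].
  rewrite mem_iota => /andP[a0 an] /allpairsP[[u' t'] [/= u'ch t'tr [-> ->]]].
  move: u'ch t'tr; case: (ch_ok a ltac:(lia)) => _ -> /and3P[-> -> /eqP ua].
  case: (rest_ok a ltac:(lia)) => _ -> /and3P[-> -> /eqP ta].
  by apply/eqP; lia.
have u0 := nverts_gt0 u; have t0 := nverts_gt0 t.
(* [set] merges the occurrences of [nverts] at [ctree 'I_m] and at its eqType
   copy, which [lia] would otherwise treat as distinct atoms. *)
move: sz u0 t0; set a := nverts u; set b := nverts t => sz u0 t0.
exists a; first by rewrite mem_iota; apply/andP; split; lia.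
apply/allpairsP; exists (u, t); split => //.
  by case: (ch_ok a ltac:(lia)) => _ ->; rewrite /= Aiu Au eqxx.
by case: (rest_ok a ltac:(lia)) => _ ->; rewrite /is_Atree /= At ti -sz addKn; exact: eqxx.
Qed.

Lemma enum_trees_fuel_enumerates fuel n i :
  n <= fuel -> enumerates (enum_trees_fuel fuel n i) (is_Atree i n).
Proof.
elim: fuel n i => [|fuel IH] n i nfuel.
  split=> // t; rewrite in_nil /is_Atree; move: nfuel; rewrite leqn0 => /eqP ->.
  by rewrite eqn0Ngt nverts_gt0 !andbF.
rewrite /=; case: eqP => [-> | n1].
  split=> // t; rewrite inE /is_Atree.
  case: (leaf_or_graft t) => [[c ->] | [u [t' ->]]].
    by rewrite /= andbT; apply/eqP/eqP => [[] | ->].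
  rewrite is_Acoloring_graft root_color_graft nverts_graft.
  have sz_ne1 : nverts u + nverts t' != 1.
    by have := nverts_gt0 u; have := nverts_gt0 t'; lia.
  by rewrite (negbTE sz_ne1) !andbF; apply/negbTE/eqP; case: t' {sz_ne1}.
have [ps_uniq ps_mem] : enumerates (graft_pairs (enum_trees_fuel fuel) i n)
    [pred p | is_Atree i n (graft p.1 p.2)].
  by apply: graft_pairs_enumerates => a j an; apply: IH; lia.
split.
  by rewrite (map_inj_uniq (@graft_inj _)).
move=> t; apply/mapP/idP => [[[u t'] + ->] | tn].
  by rewrite ps_mem.
case: (leaf_or_graft t) tn => [[c ->] | [u [t' ->]] tn].
  by rewrite /is_Atree /= => /andP[_ /eqP/esym].
by exists (u, t'); rewrite ?ps_mem.
Qed.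

Definition tree_count (n : nat) (i : 'I_m) : nat := size (enum_trees_fuel n n i).

Lemma tree_count_card n i : tA_is A i n (tree_count n i).
Proof.
have [uniq_tr mem_tr] := enum_trees_fuel_enumerates i (leqnn n).
apply: has_card_seq => // t; rewrite mem_tr /is_Atree.
by split => [[-> -> ->] | /and3P[-> /eqP -> /eqP ->]]; rewrite ?eqxx.
Qed.

Lemma size_enum_trees_fuel fuel n i :
  n <= fuel -> size (enum_trees_fuel fuel n i) = tree_count n i.
Proof.
move=> nfuel; apply: (enumerates_size (enum_trees_fuel_enumerates i nfuel)).
exact: enum_trees_fuel_enumerates.
Qed.

Lemma tree_count0 i : tree_count 0 i = 0.
Proof. by []. Qed.

Lemma size_graft_pairs tr i n :
  size (graft_pairs tr i n) =
  \sum_(a <- iota 1 n.-1) (\sum_(j | A i j == 1) size (tr a j)) * size (tr (n - a) i).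
Proof.
rewrite size_flatten /shape -map_comp sumnE big_map; apply: eq_bigr => a _ /=.
by rewrite size_allpairs size_flatten /shape -map_comp sumnE big_map big_filter big_enum_cond.
Qed.

Lemma tree_countE n i :
  tree_count n i =
  (n == 1) + \sum_(a < n.+1) (\sum_(j | A i j == 1) tree_count a j) * tree_count (n - a) i.
Proof.
have no_empty_child a : (\sum_(j | A i j == 1) tree_count 0 j) * tree_count a i = 0.
  by rewrite big1.
case: n => [|[|n]]; first by rewrite big_ord1 muln0.
  by rewrite big_ord_recr big_ord1 no_empty_child muln0.
pose F a := (\sum_(j | A i j == 1) tree_count a j) * tree_count (n.+2 - a) i.
rewrite -(big_mkord predT F) big_ltn // big_nat_recr //= /F no_empty_child subnn muln0 addn0.
have -> : tree_count n.+2 i = size (graft_pairs (enum_trees_fuel n.+1) i n.+2).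
  by rewrite /tree_count /= size_map.
rewrite size_graft_pairs; apply: eq_big_seq => a; rewrite mem_iota => /andP[a0 an].
rewrite size_enum_trees_fuel; last lia.
by congr (_ * _); apply: eq_bigr => j _; apply: size_enum_trees_fuel; lia.
Qed.

End Enumeration.

Local Open Scope ring_scope.

Lemma dvdp_XnP (R : idomainType) (N : nat) (p : {poly R}) :
  reflect (forall n, (n < N)%N -> p`_n = 0) ('X^N %| p).
Proof.
apply: (iffP (modp_eq0P _ _)); rewrite -Pdiv.IdomainMonic.take_poly_modp.
  by move=> p_low n nN; have := coef_take_poly N p n; rewrite nN p_low coef0.
by move=> p_low; apply/polyP => n; rewrite coef_take_poly coef0; case: ifP => // /p_low.
Qed.

Definition tree_gf (R : nzSemiRingType) m (A : 'M[nat]_m) (N : nat) (i : 'I_m) : {poly R} :=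
  \poly_(n < N) (tree_count A n i)%:R.

Section TreeGeneratingPolynomial.
Variables (R : idomainType) (m : nat) (A : 'M[nat]_m) (N : nat).
Local Notation T := (tree_gf R A N).

Lemma tree_gf_rec i : 'X^N %| T i - ('X + (\sum_(j | A i j == 1%N) T j) * T i).
Proof.
apply/dvdp_XnP => n nN; apply/eqP; rewrite coefB subr_eq0 coefD coefX coefM.
rewrite coef_poly nN tree_countE natrD natr_sum; apply/eqP; congr (_ + _); apply: eq_bigr => a _.
rewrite natrM natr_sum coef_sum coef_poly ifT; last by apply: leq_ltn_trans nN; apply: leq_subr.
by congr (_ * _); apply: eq_bigr => j _; rewrite coef_poly (leq_ltn_trans _ nN) // -ltnS.
Qed.

End TreeGeneratingPolynomial.

(* Modulo d, [forest_ratio] says that r / q is the series 1 / (1 - S) of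
   forests; then T = x / (1 - S) is x r / q, and the forests built from the
   trees counted by S + T have series r q / (q^2 - x r^2). *)
Section ForestRatio.
Variables (R : idomainType) (d x S T r q : {poly R}).
Hypotheses (T_eq : d %| T - (x + S * T)) (forest_ratio : d %| (1 - S) * r - q).

Lemma tree_ratio : d %| T * q - x * r.
Proof.
have -> : T * q - x * r = r * (T - (x + S * T)) - T * ((1 - S) * r - q) by ring.
by rewrite dvdp_sub ?dvdp_mull.
Qed.

Lemma forest_ratio_next : d %| (1 - (S + T)) * (r * q) - (q ^+ 2 - x * r ^+ 2).
Proof.
have -> : (1 - (S + T)) * (r * q) - (q ^+ 2 - x * r ^+ 2) =
          q * ((1 - S) * r - q) - r * (T * q - x * r) by ring.
by rewrite dvdp_sub ?dvdp_mull ?tree_ratio.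
Qed.

End ForestRatio.

Fixpoint rq (k : nat) : {poly rat} * {poly rat} :=
  if k is k'.+1 then
    ((rq k').1 * (rq k').2, (rq k').2 ^+ 2 - 'X * (rq k').1 ^+ 2)
  else (1, 1).

Lemma pq_rq k : pq k = ('X * (rq k).1, (rq k).2).
Proof.
elim: k => [|k /= ->]; first by rewrite /= mulr1.
congr (_, _); first by rewrite mulrA.
have -> : ('X * (rq k).1) ^+ 2 = 'X * (rq k).1 ^+ 2 * 'X by ring.
by rewrite mulpK ?polyX_eq0.
Qed.

Lemma rq_coef0 k : (rq k).2`_0 = 1.
Proof. by elim: k => [|k IH] /=; rewrite ?coef1 // coefB coefXM coef0M expr2 IH mulr1 subr0. Qed.

Section ColoringAm.
Variables (m N : nat).
Local Notation T := (tree_gf rat (Amat m.+1) N).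
Local Notation S k := (\sum_(j < k) T (inord j)).

Lemma Amat_tree_gf_rec (i : 'I_m.+1) : 'X^N %| T i - ('X + S i * T i).
Proof.
suff <- : \sum_(j | Amat m.+1 i j == 1%N) T j = S i by apply: tree_gf_rec.
rewrite (big_ord_widen m.+1 (fun j => T (inord j))) 1?ltnW //.
by apply: eq_big => [j | j _]; [rewrite mxE; case: ltnP | rewrite inord_val].
Qed.

Lemma Amat_forest_ratio k : (k <= m.+1)%N -> 'X^N %| (1 - S k) * (rq k).1 - (rq k).2.
Proof.
elim: k => [_|k IH km]; first by rewrite big_ord0 subr0 mul1r subrr dvdp0.
have := Amat_tree_gf_rec (inord k); rewrite inordK // => T_eq.
by rewrite big_ord_recr /=; apply: forest_ratio_next T_eq (IH (ltnW km)).
Qed.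

Lemma Amat_tree_ratio : 'X^N %| T ord_max * (rq m).2 - 'X * (rq m).1.
Proof. exact: tree_ratio (Amat_tree_gf_rec ord_max) (Amat_forest_ratio (leqnSn m)). Qed.

End ColoringAm.

Theorem theorem40 (m : nat) :
  exists c : nat -> nat,
    c 0%N = 0%N /\
    (forall n : nat, (1 <= n)%N -> tA_is (Amat m.+1) ord_max n (c n)) /\
    (qm m.+1)`_0 != 0 /\
    (forall n : nat,
       \sum_(k < n.+1) (c k)%:R * (qm m.+1)`_(n - k) = (pm m.+1)`_n).
Proof.
exists (tree_count (Amat m.+1) ^~ ord_max); split; first exact: tree_count0.
split; first by move=> n _; apply: tree_count_card.
rewrite /qm /pm /= pq_rq /= rq_coef0 oner_eq0; split=> // n.
have /dvdp_XnP/(_ n (ltnSn n))/eqP := Amat_tree_ratio m n.+1.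
rewrite coefB subr_eq0 coefM => /eqP <-; apply: eq_bigr => k _.
by rewrite coef_poly ltn_ord.
Qed.
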